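(* Let $\alpha>0$. The convex hull of $$\left\{\left(\frac{p_2(\mathbf x)}{\alpha^2},\frac{p_3(\mathbf x)}{\alpha^3}\right):\ \mathbf x\in\mathbf X,\ p_1(\mathbf x)=\alpha\right\}$$ is equal to the convex hull of $\{(1/m,1/m^2): m\in\mathbb{N}^+\}$.
   Context: $\mathbf X$ is the set of infinite sequences $\mathbf x=(x_1,x_2,\dots)$ of reals with $x_1\ge x_2\ge\cdots\ge0$ (those with $p_1(\mathbf x)=\alpha$ finite are considered). $p_j(\mathbf x)=\sum_i x_i^j$ denotes the $j$-th power sum. *)

From Stdlib Require Import Reals Lra.
Open Scope R_scope.

(** The space X: nonincreasing sequences of nonnegative reals
    (x_1 >= x_2 >= ... >= 0), indexed from 0 here. *)
Definition inX (x : nat -> R) : Prop :=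
  (forall i, x (S i) <= x i) /\ (forall i, 0 <= x i).

Definition power_sum_is (j : nat) (x : nat -> R) (s : R) : Prop :=
  infinite_sum (fun i => x i ^ j) s.

Definition convex_hull (S : R * R -> Prop) : R * R -> Prop :=
  fun p => exists (n : nat) (lam : nat -> R) (q : nat -> R * R),
    (forall i, (i <= n)%nat -> 0 <= lam i /\ S (q i)) /\
    sum_f_R0 lam n = 1 /\
    fst p = sum_f_R0 (fun i => lam i * fst (q i)) n /\
    snd p = sum_f_R0 (fun i => lam i * snd (q i)) n.

Definition moment_set (alpha : R) : R * R -> Prop :=
  fun p => exists x : nat -> R, exists s2 s3 : R,
    inX x /\ power_sum_is 1 x alpha /\
    power_sum_is 2 x s2 /\ power_sum_is 3 x s3 /\
    p = (s2 / alpha ^ 2, s3 / alpha ^ 3).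

Definition harmonic_points : R * R -> Prop :=
  fun p => exists m : nat, (1 <= m)%nat /\ p = (1 / INR m, 1 / INR m ^ 2).

(* Write phi_M(y) = y (M y - 1) ((M + 1) y - 1) for an integer M >= 1.  The hull
   of the points (1/m, 1/m^2) is the region b <= a <= 1 (with b = a only at
   (1, 1)) cut out by the chords M (M + 1) b - (2 M + 1) a + 1 >= 0 through
   consecutive points, and for a sequence y with sum 1 this chord functional
   is sum_i phi_M(y_i).  Its nonnegativity holds already for finitely many
   weights summing to 1, by induction on their number: two small weights can
   be merged, since phi_M is subadditive near 0, and otherwise a tangent line
   of phi_M at 1/N, 1/(M + 1) or (1 - g)/M bounds the sum from below.  Partial
   sums of a sequence are normalized before applying this, and the bound
   passes to the limit.  Conversely each point of the region lies between a
   chord of consecutive points and a chord from (1, 1) to a far point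
   (1/k, 1/k^2), and (1/m, 1/m^2) is realized by m equal terms. *)
From Stdlib Require Import Reals Lra Lia Psatz List Permutation.
Import ListNotations.
Open Scope R_scope.

Lemma INR_ge_1 (m : nat) : (1 <= m)%nat -> 1 <= INR m.
Proof. intros Hm. rewrite <- INR_1. now apply le_INR. Qed.

Lemma Rdiv_le_0_compat (a b : R) : 0 <= a -> 0 < b -> 0 <= a / b.
Proof. intros Ha Hb. apply Rmult_le_pos; [exact Ha|left; now apply Rinv_0_lt_compat]. Qed.

Lemma Rdiv_le_iff (x y z : R) : 0 < z -> (x / z <= y <-> x <= y * z).
Proof.
  intros Hz. replace x with (x / z * z) at 2 by (field; lra).
  split; intros H; [apply Rmult_le_compat_r; lra|apply Rmult_le_reg_r with z; lra].
Qed.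

Lemma Rle_div_iff (x y z : R) : 0 < z -> (y <= x / z <-> y * z <= x).
Proof.
  intros Hz. replace x with (x / z * z) at 2 by (field; lra).
  split; intros H; [apply Rmult_le_compat_r; lra|apply Rmult_le_reg_r with z; lra].
Qed.

Lemma nat_floor (x : R) : 1 <= x -> exists m : nat, (1 <= m)%nat /\ INR m <= x < INR m + 1.
Proof.
  intros Hx. destruct (INR_unbounded x) as [k Hk].
  induction k as [|k IH]; [simpl in Hk; lra|].
  destruct (Rlt_le_dec x (INR k)) as [Hlt|Hle]; [now apply IH|].
  exists k. rewrite S_INR in Hk. split; [|lra].
  destruct k; [simpl in Hk; lra|lia].
Qed.

Lemma cv_const (c : R) : Un_cv (fun _ => c) c.
Proof.
  intros eps Heps. exists 0%nat. intros n _. unfold Rdist.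
  rewrite Rminus_diag, Rabs_R0. lra.
Qed.

Lemma sum_f_R0_lincomb3 (u v w : nat -> R) (a1 a2 a3 : R) (n : nat) :
  sum_f_R0 (fun i => a1 * u i + a2 * v i + a3 * w i) n =
  a1 * sum_f_R0 u n + a2 * sum_f_R0 v n + a3 * sum_f_R0 w n.
Proof. induction n as [|n IH]; simpl; [|rewrite IH]; ring. Qed.

Lemma sum_f_R0_ge_first (y : nat -> R) (n : nat) :
  (forall i, 0 <= y i) -> y 0%nat <= sum_f_R0 y n.
Proof. intros Hy. induction n as [|n IH]; simpl; [lra|pose proof (Hy (S n)); lra]. Qed.

Lemma infinite_sum_scale (f g : nat -> R) (s c : R) :
  (forall i, g i = f i * c) -> infinite_sum f s -> infinite_sum g (s * c).
Proof.
  intros Hg Hf.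
  assert (H : Un_cv (fun n => sum_f_R0 f n * c) (s * c))
    by exact (CV_mult _ _ _ _ Hf (cv_const c)).
  intros eps Heps. destruct (H eps Heps) as [N HN]. exists N. intros n Hn.
  rewrite (sum_eq g (fun i => f i * c)) by (intros i _; apply Hg).
  rewrite <- scal_sum, Rmult_comm. now apply HN.
Qed.

(** * The cubic phi_M *)

Definition phi (M y : R) : R := y * (M * y - 1) * ((M + 1) * y - 1).

Definition dphi (M y : R) : R := 3 * M * (M + 1) * y ^ 2 - 2 * (2 * M + 1) * y + 1.

Lemma phi_tangent_le (M z y : R) :
  2 * M + 1 <= M * (M + 1) * (y + 2 * z) -> phi M z + dphi M z * (y - z) <= phi M y.
Proof.
  intros H. unfold phi, dphi.
  assert (E : y * (M * y - 1) * ((M + 1) * y - 1)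
              - (z * (M * z - 1) * ((M + 1) * z - 1)
                 + (3 * M * (M + 1) * z ^ 2 - 2 * (2 * M + 1) * z + 1) * (y - z))
            = (y - z) ^ 2 * (M * (M + 1) * (y + 2 * z) - (2 * M + 1))) by ring.
  assert (0 <= (y - z) ^ 2 * (M * (M + 1) * (y + 2 * z) - (2 * M + 1)))
    by (apply Rmult_le_pos; [apply pow2_ge_0|lra]).
  lra.
Qed.

Lemma phi_add_le (M a b : R) :
  0 <= a -> 0 <= b -> 3 * M * (M + 1) * (a + b) <= 2 * (2 * M + 1) ->
  phi M (a + b) <= phi M a + phi M b.
Proof.
  intros Ha Hb H.
  assert (E : phi M (a + b) - phi M a - phi M b
              = a * b * (3 * M * (M + 1) * (a + b) - 2 * (2 * M + 1))) by (unfold phi; ring).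
  assert (0 <= a * b) by now apply Rmult_le_pos.
  nra.
Qed.

Lemma phi_nonneg (M y : R) :
  0 <= y -> (M + 1) * y <= 1 \/ 1 <= M * y -> 0 <= phi M y.
Proof.
  intros Hy H. unfold phi. rewrite Rmult_assoc. apply Rmult_le_pos; [exact Hy|].
  destruct H; nra.
Qed.

Lemma phi_split_nonneg (M g : R) :
  1 <= M -> 0 <= g -> 0 <= M * phi M ((1 - g) / M) + phi M g.
Proof.
  intros HM Hg.
  replace (M * phi M ((1 - g) / M) + phi M g)
    with ((M - 1) * (g / M) * (1 - (M + 1) * g) ^ 2) by (unfold phi; field; lra).
  apply Rmult_le_pos; [apply Rmult_le_pos|apply pow2_ge_0]; [lra|].
  apply Rdiv_le_0_compat; lra.
Qed.

Fixpoint sum_list (l : list R) : R :=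
  match l with nil => 0 | a :: l' => a + sum_list l' end.

Lemma sum_list_perm (l l' : list R) : Permutation l l' -> sum_list l = sum_list l'.
Proof. intros H; induction H; simpl; lra. Qed.

Lemma sum_list_app (l l' : list R) : sum_list (l ++ l') = sum_list l + sum_list l'.
Proof. induction l as [|a l IH]; simpl; lra. Qed.

Lemma sum_list_map_seq (g : nat -> R) (n : nat) :
  sum_list (map g (seq 0 (S n))) = sum_f_R0 g n.
Proof.
  induction n as [|n IH]; [simpl; lra|].
  rewrite seq_S, map_app, sum_list_app, IH. simpl. lra.
Qed.

Lemma list_two_or_at_most_one {A : Type} (P : A -> Prop)
    (P_dec : forall x, {P x} + {~ P x}) (l : list A) :
  (exists a b l', Permutation l (a :: b :: l') /\ P a /\ P b) \/
  (exists g l', Permutation l (g :: l') /\ P g /\ forall y, In y l' -> ~ P y) \/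
  (forall y, In y l -> ~ P y).
Proof.
  induction l as [|x l IH]; [right; right; intros y []|].
  destruct IH as [[a [b [l' [Hp [Ha Hb]]]]] | [[g [l' [Hp [Hg Hl']]]] | Hl]].
  - left. exists a, b, (x :: l'). split; [|auto].
    rewrite Hp. exact (Permutation_middle [a; b] l' x).
  - destruct (P_dec x) as [Hx|Hx].
    + left. exists x, g, l'. auto.
    + right; left. exists g, (x :: l'). split; [|split; [exact Hg|]].
      * rewrite Hp. apply perm_swap.
      * intros y [<-|Hy]; auto.
  - destruct (P_dec x) as [Hx|Hx].
    + right; left. exists x, l. auto.
    + right; right. intros y [<-|Hy]; auto.
Qed.

Section TangentBounds.

Variable M : R.

Lemma sum_phi_ge_tangent (z : R) (l : list R) :
  (forall y, In y l -> 2 * M + 1 <= M * (M + 1) * (y + 2 * z)) ->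
  INR (length l) * phi M z + dphi M z * (sum_list l - INR (length l) * z)
    <= sum_list (map (phi M) l).
Proof.
  induction l as [|a l IH]; intros H; simpl (sum_list _); simpl (length _).
  - simpl (INR 0). lra.
  - rewrite S_INR.
    pose proof (phi_tangent_le M z a (H a (in_eq a l))) as Ha.
    pose proof (IH (fun y Hy => H y (in_cons a y l Hy))) as Hl.
    assert (E : (INR (length l) + 1) * phi M z
                + dphi M z * (a + sum_list l - (INR (length l) + 1) * z)
              = (INR (length l) * phi M z + dphi M z * (sum_list l - INR (length l) * z))
                + (phi M z + dphi M z * (a - z))) by ring.
    lra.
Qed.

Lemma sum_phi_ge_mean (z : R) (l : list R) :
  INR (length l) * z = sum_list l ->
  (forall y, In y l -> 2 * M + 1 <= M * (M + 1) * (y + 2 * z)) ->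
  INR (length l) * phi M z <= sum_list (map (phi M) l).
Proof.
  intros Hz H. pose proof (sum_phi_ge_tangent z l H) as T.
  rewrite <- Hz, Rminus_diag, Rmult_0_r, Rplus_0_r in T. exact T.
Qed.

End TangentBounds.

Section SumPhiNonneg.

Variable m : nat.
Hypothesis m_pos : (1 <= m)%nat.

Let M := INR m.
Let M_ge_1 : 1 <= M := INR_ge_1 m m_pos.

Lemma sum_phi_ge_large (l : list R) :
  (m < length l)%nat -> (forall y, In y l -> 1 <= M * (M + 1) * y) ->
  (1 - sum_list l) / (M + 1) <= sum_list (map (phi M) l).
Proof.
  intros HN H.
  assert (HL : M + 1 <= INR (length l)) by (unfold M; rewrite <- S_INR; now apply le_INR).
  assert (Hcond : forall y, In y l -> 2 * M + 1 <= M * (M + 1) * (y + 2 * (1 / (M + 1)))).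
  { intros y Hy. pose proof (H y Hy).
    replace (M * (M + 1) * (y + 2 * (1 / (M + 1)))) with (M * (M + 1) * y + 2 * M)
      by (field; lra). lra. }
  pose proof (sum_phi_ge_tangent M (1 / (M + 1)) l Hcond) as T.
  replace (phi M (1 / (M + 1))) with 0 in T by (unfold phi; field; lra).
  replace (dphi M (1 / (M + 1))) with (- (1 / (M + 1))) in T by (unfold dphi; field; lra).
  apply Rle_trans with (2 := T).
  replace (INR (length l) * 0 + - (1 / (M + 1)) * (sum_list l - INR (length l) * (1 / (M + 1))))
    with ((INR (length l) / (M + 1) - sum_list l) / (M + 1)) by (field; lra).
  assert (1 <= INR (length l) / (M + 1)) by (apply Rle_div_iff; lra).
  unfold Rdiv at 1 3. apply Rmult_le_compat_r; [left; apply Rinv_0_lt_compat|]; lra.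
Qed.

Lemma sum_phi_few (l : list R) :
  (length l <= m)%nat -> (forall y, In y l -> 0 <= y) -> sum_list l = 1 ->
  0 <= sum_list (map (phi M) l).
Proof.
  intros HN Hnn Hs.
  assert (HNM : INR (length l) <= M) by now apply le_INR.
  assert (HN1 : 1 <= INR (length l)).
  { destruct l as [|a l]; [simpl in Hs; lra|].
    apply INR_ge_1. simpl. lia. }
  assert (Hz : INR (length l) * (1 / INR (length l)) = sum_list l) by (rewrite Hs; field; lra).
  assert (HMz : 1 <= M * (1 / INR (length l))).
  { replace (M * (1 / INR (length l))) with (M / INR (length l)) by (field; lra).
    apply Rle_div_iff; lra. }
  apply Rle_trans with (INR (length l) * phi M (1 / INR (length l))).
  - apply Rmult_le_pos; [lra|]. apply phi_nonneg; [|right; exact HMz].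
    apply Rdiv_le_0_compat; lra.
  - apply sum_phi_ge_mean; [exact Hz|].
    intros y Hy. pose proof (Hnn y Hy).
    assert (0 <= M * (M + 1) * y) by (apply Rmult_le_pos; [apply Rmult_le_pos|]; lra).
    nra.
Qed.

Lemma sum_phi_one_small (g : R) (l : list R) :
  (m <= length l)%nat -> 0 <= g -> M * (M + 1) * g < 1 -> sum_list l = 1 - g ->
  (forall y, In y l -> 1 <= M * (M + 1) * y) ->
  0 <= phi M g + sum_list (map (phi M) l).
Proof.
  intros HN Hg Hsmall Hs H.
  assert (Hg1 : (M + 1) * g <= 1) by nra.
  destruct (Nat.eq_dec (length l) m) as [Heq|Hne].
  - assert (T : INR (length l) * phi M ((1 - g) / M) <= sum_list (map (phi M) l)).
    { apply sum_phi_ge_mean; [rewrite Heq, Hs; fold M; field; lra|].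
      intros y Hy. pose proof (H y Hy).
      replace (M * (M + 1) * (y + 2 * ((1 - g) / M)))
        with (M * (M + 1) * y + 2 * (M + 1) - 2 * ((M + 1) * g)) by (field; lra).
      lra. }
    rewrite Heq in T. pose proof (phi_split_nonneg M g M_ge_1 Hg). fold M in T. lra.
  - pose proof (sum_phi_ge_large l ltac:(lia) H) as T.
    rewrite Hs in T. replace (1 - (1 - g)) with g in T by ring.
    pose proof (phi_nonneg M g Hg (or_introl Hg1)).
    assert (0 <= g / (M + 1)) by (apply Rdiv_le_0_compat; lra). lra.
Qed.

Lemma sum_phi_merge (a b : R) (l l' : list R) :
  Permutation l (a :: b :: l') -> 0 <= a -> 0 <= b ->
  M * (M + 1) * a < 1 -> M * (M + 1) * b < 1 ->
  sum_list (map (phi M) ((a + b) :: l')) <= sum_list (map (phi M) l).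
Proof.
  intros Hp Ha Hb Ha1 Hb1. rewrite (sum_list_perm _ _ (Permutation_map (phi M) Hp)).
  simpl. pose proof (phi_add_le M a b Ha Hb ltac:(nra)). lra.
Qed.

Lemma sum_phi_nonneg (l : list R) :
  (forall y, In y l -> 0 <= y) -> sum_list l = 1 -> 0 <= sum_list (map (phi M) l).
Proof.
  revert l.
  enough (Hn : forall n l, (length l <= n)%nat -> (forall y, In y l -> 0 <= y) ->
                 sum_list l = 1 -> 0 <= sum_list (map (phi M) l))
    by (intros l; now apply (Hn (length l))).
  induction n as [|n IH]; intros l Hlen Hnn Hs.
  { destruct l; [simpl in Hs; lra|simpl in Hlen; lia]. }
  destruct (Compare_dec.le_lt_dec (length l) m) as [Hfew|Hmany]; [now apply sum_phi_few|].
  assert (Hperm_nn : forall l', Permutation l l' -> forall y, In y l' -> 0 <= y)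
    by (intros l' Hp y Hy; apply Hnn, (Permutation_in _ (Permutation_sym Hp)), Hy).
  destruct (list_two_or_at_most_one (fun y => M * (M + 1) * y < 1) (fun y => Rlt_dec _ 1) l)
    as [[a [b [l' [Hp [Ha Hb]]]]] | [[g [l' [Hp [Hg Hl']]]] | Hl]].
  - pose proof (Hperm_nn _ Hp) as Hin.
    apply Rle_trans with (2 := sum_phi_merge a b l l' Hp (Hin a ltac:(simpl; auto))
                                (Hin b ltac:(simpl; auto)) Ha Hb).
    apply IH.
    + rewrite (Permutation_length Hp) in Hlen. simpl in Hlen |- *. lia.
    + intros y [<-|Hy]; [|apply Hin; simpl; auto].
      pose proof (Hin a ltac:(simpl; auto)). pose proof (Hin b ltac:(simpl; auto)). lra.
    + rewrite (sum_list_perm _ _ Hp) in Hs. simpl in Hs |- *. lra.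
  - rewrite (sum_list_perm _ _ (Permutation_map (phi M) Hp)).
    pose proof (Permutation_length Hp) as Hlen'. simpl in Hlen' |- *.
    rewrite (sum_list_perm _ _ Hp) in Hs. simpl in Hs.
    apply sum_phi_one_small; [lia|apply (Hperm_nn _ Hp); simpl; auto|exact Hg|lra|].
    intros y Hy. apply Rnot_lt_le, Hl', Hy.
  - pose proof (sum_phi_ge_large l Hmany (fun y Hy => Rnot_lt_le _ _ (Hl y Hy))) as T.
    rewrite Hs, Rminus_diag in T. unfold Rdiv in T. rewrite Rmult_0_l in T. exact T.
Qed.

End SumPhiNonneg.

(* [s1^3 * sum_i phi_M (y_i / s1)] in terms of the power sums [s_j] of the [y_i]. *)
Definition cubic_form (M s1 s2 s3 : R) : R :=
  M * (M + 1) * s3 - (2 * M + 1) * s2 * s1 + s1 * s1 * s1.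

Lemma cubic_form_cv (M : R) (u1 u2 u3 : nat -> R) (s1 s2 s3 : R) :
  Un_cv u1 s1 -> Un_cv u2 s2 -> Un_cv u3 s3 ->
  Un_cv (fun n => cubic_form M (u1 n) (u2 n) (u3 n)) (cubic_form M s1 s2 s3).
Proof.
  intros H1 H2 H3. unfold cubic_form.
  apply CV_plus; [apply CV_minus|].
  - exact (CV_mult _ _ _ _ (cv_const _) H3).
  - exact (CV_mult _ _ _ _ (CV_mult _ _ _ _ (cv_const _) H2) H1).
  - exact (CV_mult _ _ _ _ (CV_mult _ _ _ _ H1 H1) H1).
Qed.

Lemma cubic_form_partial_nonneg (m : nat) (y : nat -> R) (n : nat) :
  (1 <= m)%nat -> (forall i, 0 <= y i) -> 0 < sum_f_R0 y n ->
  0 <= cubic_form (INR m) (sum_f_R0 y n) (sum_f_R0 (fun i => y i ^ 2) n)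
                  (sum_f_R0 (fun i => y i ^ 3) n).
Proof.
  intros Hm Hy HS. set (M := INR m). set (s := sum_f_R0 y n).
  pose proof (sum_phi_nonneg m Hm (map (fun i => y i / s) (seq 0 (S n)))) as F.
  rewrite map_map, !sum_list_map_seq in F. fold M in F.
  assert (E : sum_f_R0 (fun i => phi M (y i / s)) n =
              cubic_form M s (sum_f_R0 (fun i => y i ^ 2) n) (sum_f_R0 (fun i => y i ^ 3) n)
              * / s ^ 3).
  { rewrite (sum_eq _ (fun i => (M * (M + 1) * y i ^ 3 + (- (2 * M + 1) * s) * y i ^ 2
                                  + (s * s) * y i) * / s ^ 3))
      by (intros i _; unfold phi; field; apply Rgt_not_eq, HS).
    rewrite <- scal_sum, sum_f_R0_lincomb3. unfold cubic_form. fold s. ring. }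
  rewrite E in F.
  assert (Hinv : 0 < / s ^ 3) by (apply Rinv_0_lt_compat, pow_lt, HS).
  apply (Rmult_le_reg_r (/ s ^ 3)); [exact Hinv|]. rewrite Rmult_0_l. apply F.
  - intros v Hv. apply in_map_iff in Hv. destruct Hv as [i [<- _]].
    apply Rdiv_le_0_compat; [apply Hy|exact HS].
  - rewrite (sum_eq _ (fun i => y i * / s)) by reflexivity.
    rewrite <- scal_sum. fold s. apply Rinv_l, Rgt_not_eq, HS.
Qed.

Section NormalizedSequence.

Variables (y : nat -> R) (a b : R).
Hypothesis y_inX : inX y.
Hypothesis sum1 : infinite_sum y 1.
Hypothesis sum2 : infinite_sum (fun i => y i ^ 2) a.
Hypothesis sum3 : infinite_sum (fun i => y i ^ 3) b.

Let y_nonneg : forall i, 0 <= y i := proj2 y_inX.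

Let y_le_first : forall i, y i <= y 0%nat.
Proof. induction i as [|i IH]; [lra|pose proof (proj1 y_inX i); lra]. Qed.

Lemma first_term_bounds :
  0 < y 0%nat <= 1 /\ y 0%nat ^ 2 <= a <= y 0%nat /\ y 0%nat ^ 3 <= b <= y 0%nat * a.
Proof.
  assert (Hpow : forall j i, 0 <= y i ^ j) by (intros; apply pow_le, y_nonneg).
  pose proof (sum_incr y 0 1 sum1 y_nonneg) as H1.
  pose proof (sum_incr _ 0 a sum2 (Hpow 2%nat)) as H2.
  pose proof (sum_incr _ 0 b sum3 (Hpow 3%nat)) as H3.
  simpl in H1, H2, H3. rewrite <- !Rmult_assoc, Rmult_1_r in H2, H3.
  assert (Hpos : 0 < y 0%nat).
  { apply Rnot_le_lt. intros H0.
    assert (Hzero : forall n, sum_f_R0 y n <= 0).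
    { intros n. right. apply sum_eq_R0. intros i _.
      pose proof (y_le_first i). pose proof (y_nonneg i). lra. }
    pose proof (Rle_cv_lim Hzero sum1 (cv_const 0)). lra. }
  assert (Ha : a <= 1 * y 0%nat).
  { refine (Rle_cv_lim _ sum2 (CV_mult _ _ _ _ sum1 (cv_const _))).
    intros n. rewrite Rmult_comm, scal_sum. apply sum_Rle. intros i _.
    pose proof (y_le_first i). pose proof (y_nonneg i). simpl. nra. }
  assert (Hb : b <= a * y 0%nat).
  { refine (Rle_cv_lim _ sum3 (CV_mult _ _ _ _ sum2 (cv_const _))).
    intros n. rewrite Rmult_comm, scal_sum. apply sum_Rle. intros i _.
    pose proof (y_le_first i). pose proof (y_nonneg i).
    assert (0 <= y i ^ 2) by apply pow2_ge_0.
    replace (y i ^ 3) with (y i ^ 2 * y i) by ring. nra. }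
  simpl. repeat split; lra.
Qed.

Lemma chord_functional_nonneg (m : nat) :
  (1 <= m)%nat -> 0 <= INR m * (INR m + 1) * b - (2 * INR m + 1) * a + 1.
Proof.
  intros Hm.
  replace (INR m * (INR m + 1) * b - (2 * INR m + 1) * a + 1)
    with (cubic_form (INR m) 1 a b) by (unfold cubic_form; ring).
  refine (Rle_cv_lim _ (cv_const 0) (cubic_form_cv _ _ _ _ _ _ _ sum1 sum2 sum3)).
  intros n. apply cubic_form_partial_nonneg; [exact Hm|exact y_nonneg|].
  pose proof (sum_f_R0_ge_first y n y_nonneg). pose proof (first_term_bounds). lra.
Qed.

End NormalizedSequence.

(** * The region bounded by the chords *)

(* The clause on [K] says [b < a] unless [a = 1], in a form preserved by convex
   combinations. *)
Definition harmonic_region (a b : R) : Prop :=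
  0 <= b /\ a <= 1 /\ b <= a /\ (exists K, 0 <= K /\ 1 - a <= K * (a - b)) /\
  forall m : nat, (1 <= m)%nat -> 0 <= INR m * (INR m + 1) * b - (2 * INR m + 1) * a + 1.

Lemma normalized_in_region (y : nat -> R) (a b : R) :
  inX y -> infinite_sum y 1 -> infinite_sum (fun i => y i ^ 2) a ->
  infinite_sum (fun i => y i ^ 3) b -> harmonic_region a b.
Proof.
  intros Hy H1 H2 H3.
  destruct (first_term_bounds y a b Hy H1 H2 H3) as [[Hy0 Hy1] [[Ha0 Ha1] [Hb0 Hb1]]].
  set (y0 := y 0%nat) in *.
  assert (Hy03 : 0 <= y0 ^ 3) by (apply pow_le; lra).
  assert (Hapos : 0 < a) by nra.
  repeat split; try nra.
  - (* 1 - a <= 1 - y0^2 <= 2 (1 - y0) and a - b >= a (1 - y0) *)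
    exists (2 / a). split; [apply Rdiv_le_0_compat; lra|].
    replace (2 / a * (a - b)) with (2 * (a - b) / a) by (field; lra).
    apply Rle_div_iff; nra.
  - exact (chord_functional_nonneg y a b Hy H1 H2 H3).
Qed.

Lemma moment_set_normalized (alpha : R) (p : R * R) :
  0 < alpha -> moment_set alpha p ->
  exists y, inX y /\ infinite_sum y 1 /\ infinite_sum (fun i => y i ^ 2) (fst p) /\
            infinite_sum (fun i => y i ^ 3) (snd p).
Proof.
  intros Hal [x [s2 [s3 [[Hdec Hnn] [H1 [H2 [H3 ->]]]]]]].
  exists (fun i => x i / alpha). cbn [fst snd]. repeat split.
  - intros i. apply Rmult_le_compat_r; [left; apply Rinv_0_lt_compat, Hal|apply Hdec].
  - intros i. apply Rdiv_le_0_compat; [apply Hnn|exact Hal].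
  - replace 1 with (alpha * / alpha) by (field; lra).
    apply (infinite_sum_scale (fun i => x i ^ 1)); [intros i; field; lra|exact H1].
  - apply (infinite_sum_scale (fun i => x i ^ 2) _ s2 (/ alpha ^ 2)); [|exact H2].
    intros i. field. lra.
  - apply (infinite_sum_scale (fun i => x i ^ 3) _ s3 (/ alpha ^ 3)); [|exact H3].
    intros i. field. lra.
Qed.

Lemma moment_set_in_region (alpha : R) (p : R * R) :
  0 < alpha -> moment_set alpha p -> harmonic_region (fst p) (snd p).
Proof.
  intros Hal Hp. destruct (moment_set_normalized alpha p Hal Hp) as [y [Hy [H1 [H2 H3]]]].
  exact (normalized_in_region y _ _ Hy H1 H2 H3).
Qed.

Lemma convex_hull_mono (A B : R * R -> Prop) (p : R * R) :
  (forall q, A q -> B q) -> convex_hull A p -> convex_hull B p.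
Proof.
  intros HAB [n [lam [q [Hq Hrest]]]]. exists n, lam, q. split; [|exact Hrest].
  intros i Hi. destruct (Hq i Hi). auto.
Qed.

Lemma convex_hull_point (A : R * R -> Prop) (p : R * R) : A p -> convex_hull A p.
Proof.
  intros Hp. exists 0%nat, (fun _ => 1), (fun _ => p). simpl.
  split; [intros _ _; split; [lra|exact Hp]|]. repeat split; ring.
Qed.

Definition glue {X : Type} (n : nat) (f g : nat -> X) (i : nat) : X :=
  if (i <=? n)%nat then f i else g (i - S n)%nat.

Lemma sum_glue (n1 n2 : nat) (f g : nat -> R) :
  sum_f_R0 (glue n1 f g) (n1 + S n2) = sum_f_R0 f n1 + sum_f_R0 g n2.
Proof.
  rewrite (tech2 _ n1 (n1 + S n2)) by lia.
  replace (n1 + S n2 - S n1)%nat with n2 by lia. f_equal.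
  - apply sum_eq. intros i Hi. unfold glue. now rewrite (proj2 (Nat.leb_le i n1) Hi).
  - apply sum_eq. intros i _. unfold glue.
    rewrite (proj2 (Nat.leb_gt (S n1 + i) n1)) by lia. f_equal. lia.
Qed.

Lemma convex_hull_mix (A : R * R -> Prop) (p q : R * R) (t : R) :
  0 <= t <= 1 -> convex_hull A p -> convex_hull A q ->
  convex_hull A (t * fst p + (1 - t) * fst q, t * snd p + (1 - t) * snd q).
Proof.
  intros Ht [n1 [l1 [q1 [Hq1 [Hs1 [Hf1 Hn1]]]]]] [n2 [l2 [q2 [Hq2 [Hs2 [Hf2 Hn2]]]]]].
  set (lam := glue n1 (fun i => l1 i * t) (fun i => l2 i * (1 - t))).
  assert (Hsum : forall h : R * R -> R,
             sum_f_R0 (fun i => lam i * h (glue n1 q1 q2 i)) (n1 + S n2) =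
             t * sum_f_R0 (fun i => l1 i * h (q1 i)) n1
             + (1 - t) * sum_f_R0 (fun i => l2 i * h (q2 i)) n2).
  { intros h.
    rewrite (sum_eq _ (glue n1 (fun i => l1 i * h (q1 i) * t) (fun i => l2 i * h (q2 i) * (1 - t))))
      by (intros i _; unfold lam, glue; destruct (i <=? n1)%nat; ring).
    rewrite sum_glue, !scal_sum. reflexivity. }
  exists (n1 + S n2)%nat, lam, (glue n1 q1 q2). split; [|split; [|split]].
  - intros i Hi. unfold lam, glue. destruct (Nat.leb_spec i n1).
    + destruct (Hq1 i ltac:(lia)) as [Hl HA]. split; [apply Rmult_le_pos; lra|exact HA].
    + destruct (Hq2 (i - S n1)%nat ltac:(lia)) as [Hl HA].
      split; [apply Rmult_le_pos; lra|exact HA].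
  - unfold lam. rewrite sum_glue, <- !scal_sum, Hs1, Hs2. ring.
  - rewrite Hsum, Hf1, Hf2. reflexivity.
  - rewrite Hsum, Hn1, Hn2. reflexivity.
Qed.

Lemma ratio_in_unit_interval (lo x hi : R) :
  lo < hi -> lo <= x <= hi -> 0 <= (x - lo) / (hi - lo) <= 1.
Proof. intros Hlh Hx. split; [apply Rdiv_le_0_compat|apply Rdiv_le_iff]; lra. Qed.

Lemma convex_hull_segment (A : R * R -> Prop) (a lo hi b : R) :
  convex_hull A (a, lo) -> convex_hull A (a, hi) -> lo <= b <= hi -> convex_hull A (a, b).
Proof.
  intros Hlo Hhi Hb.
  destruct (Req_dec lo hi) as [Heq|Hne]; [replace b with lo by lra; exact Hlo|].
  pose proof (ratio_in_unit_interval lo b hi ltac:(lra) Hb) as Ht.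
  set (t := (b - lo) / (hi - lo)) in Ht.
  pose proof (convex_hull_mix A _ _ t Ht Hhi Hlo) as H. cbn [fst snd] in H.
  replace (a, b) with (t * a + (1 - t) * a, t * hi + (1 - t) * lo); [exact H|].
  f_equal; [ring|unfold t; field; lra].
Qed.

Lemma convex_comb_affine_nonneg (n : nat) (lam : nat -> R) (q : nat -> R * R) (c1 c2 c0 : R) :
  (forall i, (i <= n)%nat -> 0 <= lam i /\ 0 <= c1 * fst (q i) + c2 * snd (q i) + c0) ->
  sum_f_R0 lam n = 1 ->
  0 <= c1 * sum_f_R0 (fun i => lam i * fst (q i)) n
       + c2 * sum_f_R0 (fun i => lam i * snd (q i)) n + c0.
Proof.
  intros H Hs.
  rewrite <- (Rmult_1_r c0), <- Hs, <- sum_f_R0_lincomb3.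
  rewrite <- (sum_eq_R0 (fun _ => 0) n) by reflexivity.
  apply sum_Rle. intros i Hi. destruct (H i Hi) as [Hl Ha].
  replace (c1 * (lam i * fst (q i)) + c2 * (lam i * snd (q i)) + c0 * lam i)
    with (lam i * (c1 * fst (q i) + c2 * snd (q i) + c0)) by ring.
  now apply Rmult_le_pos.
Qed.

Lemma exists_common_bound (n : nat) (P : nat -> R -> Prop) :
  (forall i K K', (i <= n)%nat -> K <= K' -> P i K -> P i K') ->
  (forall i, (i <= n)%nat -> exists K, P i K) ->
  exists K, forall i, (i <= n)%nat -> P i K.
Proof.
  induction n as [|n IH]; intros Hmono H.
  - destruct (H 0%nat (le_n 0)) as [K HK]. exists K. intros i Hi.
    now replace i with 0%nat by lia.
  - destruct IH as [K1 HK1]; [intros; apply Hmono with K; auto|intros; apply H; lia|].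
    destruct (H (S n) (le_n _)) as [K2 HK2].
    exists (Rmax K1 K2). intros i Hi. destruct (Nat.le_gt_cases i n).
    + apply Hmono with K1; [lia|apply Rmax_l|auto].
    + replace i with (S n) by lia. apply Hmono with K2; [lia|apply Rmax_r|auto].
Qed.

Lemma harmonic_region_convex (p : R * R) :
  convex_hull (fun q => harmonic_region (fst q) (snd q)) p -> harmonic_region (fst p) (snd p).
Proof.
  intros [n [lam [q [Hq [Hs [-> ->]]]]]].
  assert (Haff : forall c1 c2 c0,
             (forall i, (i <= n)%nat -> 0 <= c1 * fst (q i) + c2 * snd (q i) + c0) ->
             0 <= c1 * sum_f_R0 (fun i => lam i * fst (q i)) n
                  + c2 * sum_f_R0 (fun i => lam i * snd (q i)) n + c0)
    by (intros c1 c2 c0 Hc; apply convex_comb_affine_nonneg; [|exact Hs];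
        intros i Hi; split; [apply Hq|apply Hc]; exact Hi).
  destruct (exists_common_bound n
              (fun i K => 0 <= K /\ 1 - fst (q i) <= K * (fst (q i) - snd (q i))))
    as [K HK].
  { intros i K K' Hi HKK' [HK0 HK]. destruct (proj2 (Hq i Hi)) as [_ [_ [Hba _]]].
    split; [lra|]. assert (0 <= (K' - K) * (fst (q i) - snd (q i))) by (apply Rmult_le_pos; lra).
    nra. }
  { intros i Hi. apply (proj2 (Hq i Hi)). }
  repeat split.
  - pose proof (Haff 0 1 0 ltac:(intros i Hi; destruct (proj2 (Hq i Hi)) as [H _]; lra)). lra.
  - pose proof (Haff (-1) 0 1
                  ltac:(intros i Hi; destruct (proj2 (Hq i Hi)) as [_ [H _]]; lra)). lra.
  - pose proof (Haff 1 (-1) 0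
                  ltac:(intros i Hi; destruct (proj2 (Hq i Hi)) as [_ [_ [H _]]]; lra)). lra.
  - exists K. split; [exact (proj1 (HK 0%nat (Nat.le_0_l n)))|].
    pose proof (Haff (1 + K) (- K) (-1) ltac:(intros i Hi; destruct (HK i Hi); lra)). lra.
  - intros m Hm.
    pose proof (Haff (- (2 * INR m + 1)) (INR m * (INR m + 1)) 1
                  ltac:(intros i Hi; destruct (proj2 (Hq i Hi)) as [_ [_ [_ [_ H]]]];
                        pose proof (H m Hm); lra)).
    lra.
Qed.

Lemma chord_in_hull (m k : nat) (a : R) :
  (1 <= m)%nat -> (m < k)%nat -> 1 / INR k <= a <= 1 / INR m ->
  convex_hull harmonic_points (a, (1 / INR m + 1 / INR k) * a - 1 / (INR m * INR k)).
Proof.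
  intros Hm Hk Ha.
  assert (HM : 1 <= INR m) by now apply INR_ge_1.
  assert (HMK : INR m < INR k) by now apply lt_INR.
  set (u := 1 / INR m) in *. set (v := 1 / INR k) in *.
  assert (Huv : v < u).
  { unfold u, v. apply Rmult_lt_compat_l; [lra|]. apply Rinv_lt_contravar; nra. }
  pose proof (ratio_in_unit_interval v a u Huv Ha) as Ht.
  set (t := (a - v) / (u - v)) in Ht.
  assert (Hpt : forall j : nat, (1 <= j)%nat ->
                 convex_hull harmonic_points (1 / INR j, 1 / INR j ^ 2))
    by (intros j Hj; apply convex_hull_point; exists j; auto).
  pose proof (convex_hull_mix _ _ _ t Ht (Hpt m Hm) (Hpt k ltac:(lia))) as H. cbn [fst snd] in H.
  replace (a, (u + v) * a - 1 / (INR m * INR k))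
    with (t * u + (1 - t) * v, t * (1 / INR m ^ 2) + (1 - t) * (1 / INR k ^ 2)); [exact H|].
  unfold t, u, v. f_equal; field; split; lra.
Qed.

Lemma harmonic_region_in_hull (a b : R) :
  harmonic_region a b -> convex_hull harmonic_points (a, b).
Proof.
  intros [Hb0 [Ha1 [Hba [[K [HK0 HK]] Hchord]]]].
  destruct (Rle_lt_or_eq_dec b a Hba) as [Hlt|Heq].
  2:{ subst b. replace a with 1 by (rewrite Rminus_diag, Rmult_0_r in HK; lra).
    apply convex_hull_point. exists 1%nat. split; [lia|]. simpl. f_equal; field. }
  assert (Ha0 : 0 < a) by lra.
  destruct (nat_floor (1 / a)) as [m [Hm [HmL HmU]]]; [apply Rle_div_iff; lra|].
  apply Rle_div_iff in HmL; [|exact Ha0].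
  assert (HmU' : 1 <= (INR m + 1) * a) by (apply Rdiv_le_iff; lra).
  pose proof (INR_ge_1 m Hm) as HM.
  destruct (INR_unbounded (1 / a + (1 - a) / (a - b) + 1)) as [k Hk].
  assert (H1a : 0 <= 1 / a) by (apply Rdiv_le_0_compat; lra).
  assert (Hab : 0 <= (1 - a) / (a - b)) by (apply Rdiv_le_0_compat; lra).
  assert (Hk1 : (1 < k)%nat) by (apply INR_lt; simpl; lra).
  assert (Hka : 1 <= INR k * a) by (apply Rdiv_le_iff; lra).
  assert (HkU : 1 - a <= INR k * (a - b)) by (apply Rdiv_le_iff; lra).
  apply (convex_hull_segment _ a
           ((1 / INR m + 1 / INR (S m)) * a - 1 / (INR m * INR (S m)))
           ((1 / INR 1 + 1 / INR k) * a - 1 / (INR 1 * INR k))).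
  - apply chord_in_hull; [exact Hm|lia|]. rewrite S_INR.
    split; [apply Rdiv_le_iff|apply Rle_div_iff]; lra.
  - apply chord_in_hull; [lia|exact Hk1|]. simpl (INR 1).
    split; [apply Rdiv_le_iff|apply Rle_div_iff]; lra.
  - pose proof (Hchord m Hm) as Hc. rewrite S_INR. simpl (INR 1).
    split.
    + replace ((1 / INR m + 1 / (INR m + 1)) * a - 1 / (INR m * (INR m + 1)))
        with (((2 * INR m + 1) * a - 1) / (INR m * (INR m + 1))) by (field; lra).
      apply Rdiv_le_iff; nra.
    + replace ((1 / 1 + 1 / INR k) * a - 1 / (1 * INR k))
        with ((INR k * a + a - 1) / INR k) by (field; lra).
      apply Rle_div_iff; nra.
Qed.

Definition block (m : nat) (c : R) (i : nat) : R := if (i <? m)%nat then c else 0.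

Lemma sum_block_pow (m j n : nat) (c : R) :
  (0 < j)%nat -> sum_f_R0 (fun i => block m c i ^ j) n = INR (Nat.min (S n) m) * c ^ j.
Proof.
  intros Hj. unfold block. induction n as [|n IH]; simpl sum_f_R0.
  - destruct (Nat.ltb_spec 0 m).
    + replace (Nat.min 1 m) with 1%nat by lia. simpl. ring.
    + replace (Nat.min 1 m) with 0%nat by lia. rewrite pow_i by exact Hj. simpl. ring.
  - rewrite IH. destruct (Nat.ltb_spec (S n) m).
    + replace (Nat.min (S (S n)) m) with (S (S n)) by lia.
      replace (Nat.min (S n) m) with (S n) by lia. rewrite (S_INR (S n)). ring.
    + replace (Nat.min (S (S n)) m) with m by lia.
      replace (Nat.min (S n) m) with m by lia. rewrite pow_i by exact Hj. ring.
Qed.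

Lemma block_power_sum (m j : nat) (c : R) :
  (0 < j)%nat -> infinite_sum (fun i => block m c i ^ j) (INR m * c ^ j).
Proof.
  intros Hj eps Heps. exists m. intros n Hn.
  rewrite sum_block_pow by exact Hj. replace (Nat.min (S n) m) with m by lia.
  unfold Rdist. rewrite Rminus_diag, Rabs_R0. lra.
Qed.

Lemma harmonic_points_in_moment_set (alpha : R) (p : R * R) :
  0 < alpha -> harmonic_points p -> moment_set alpha p.
Proof.
  intros Hal [m [Hm ->]].
  pose proof (INR_ge_1 m Hm) as HM.
  set (c := alpha / INR m).
  assert (Hc : 0 <= c) by (apply Rdiv_le_0_compat; lra).
  exists (block m c), (INR m * c ^ 2), (INR m * c ^ 3).
  split; [split|split; [|split; [|split]]].
  - intros i. unfold block. destruct (Nat.ltb_spec (S i) m), (Nat.ltb_spec i m); lra || lia.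
  - intros i. unfold block. destruct (i <? m)%nat; lra.
  - replace alpha with (INR m * c ^ 1) by (unfold c; field; lra).
    apply block_power_sum. lia.
  - apply block_power_sum. lia.
  - apply block_power_sum. lia.
  - unfold c. f_equal; field; lra.
Qed.

Theorem lemmaA4 (alpha : R) (Halpha : 0 < alpha) :
  forall p : R * R, convex_hull (moment_set alpha) p <-> convex_hull harmonic_points p.
Proof.
  intros [a b]. split; intros H.
  - apply harmonic_region_in_hull, (harmonic_region_convex (a, b)).
    apply (convex_hull_mono (moment_set alpha)); [|exact H].
    intros q Hq. exact (moment_set_in_region alpha q Halpha Hq).
  - apply (convex_hull_mono harmonic_points); [|exact H].
    intros q Hq. exact (harmonic_points_in_moment_set alpha q Halpha Hq).
Qed.
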